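(* Let $p\in\mathbb{C}[z_1,\dots,z_d]$ have total degree $n$ and no zeros in $\mathbb{D}^d$, and suppose $p$ vanishes to order $M$ at $u=(1,\dots,1)$, so that $p(u-\zeta)=\sum_{j=M}^nP_j(\zeta)$ with each $P_j$ a homogeneous polynomial of degree $j$ and $P_M\neq0$. Then $P_M$ has no zeros in $\{\zeta\in\mathbb{C}:\mathrm{Re}\,\zeta>0\}^d$.
   Context: $\mathbb{D}$ denotes the open unit disk in $\mathbb{C}$. *)

From mathcomp Require Import all_boot all_algebra.
From mathcomp Require Import complex.
From mathcomp Require Import Rstruct.
From mathcomp.multinomials Require Import mpoly.

Set Implicit Arguments.
Unset Strict Implicit.
Unset Printing Implicit Defensive.
Import GRing.Theory Num.Theory.
Local Open Scope ring_scope.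

Notation CC := (complex Rdefinitions.R).

Definition shift_u (d : nat) (p : {mpoly CC[d]}) : {mpoly CC[d]} :=
  p \mPo [tuple (1 - 'X_i) | i < d].

Definition hpart (d j : nat) (q : {mpoly CC[d]}) : {mpoly CC[d]} :=
  pihomog mdeg j q.

Definition in_polydisk (d : nat) (z : 'I_d -> CC) : Prop :=
  forall i, `|z i| < 1.

Definition in_right_halfplane (d : nat) (z : 'I_d -> CC) : Prop :=
  forall i, 0 < complex.Re (z i).

From mathcomp Require Import all_boot all_order all_algebra.
From mathcomp Require Import complex.
From mathcomp Require Import Rstruct.
From mathcomp.multinomials Require Import mpoly.
From mathcomp Require Import ring.
Import Order.TTheory GRing.Theory Num.Theory.
Local Open Scope ring_scope.

(* Suppose P_M(zeta) = 0 with Re zeta > 0 and put q(z) = p(u - z), which has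
   no zeros on {z | |1 - z_i| < 1 for all i}.  Pick w with P_M(w) <> 0 (found
   by a Kronecker substitution) and restrict to the complex line
   s |-> zeta + s (w - zeta).  Splitting q into homogeneous parts,
   q(t (zeta + s (w - zeta))) = t^M (G(s) + O(t)) as t -> 0, where
   G(s) = P_M(zeta + s (w - zeta)) is nonzero and G(0) = 0.  For small t > 0
   and |s| < rho the point t (zeta + s (w - zeta)) stays in the zero-free
   region of q, so these polynomials in s have no roots in |s| < rho.  Such a
   polynomial h satisfies |h_k| rho^k <= 2^(size h) |h_0|; since G_0 = 0 this
   gives |G_k| rho^k = O(t) for every k, contradicting G <> 0. *)

Lemma exists_pos_mul_lt1 {R : numFieldType} {K : R} :
  0 <= K -> exists2 t : R, 0 < t & t * K < 1.
Proof.
move=> K0; have K1 : 0 < 1 + K by rewrite ltr_pwDl.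
exists (1 + K)^-1; first by rewrite invr_gt0.
by rewrite mulrC ltr_pdivrMr // mul1r ltrDr.
Qed.

Lemma exists_pos_lower_bound {R : numFieldType} {n} {f : 'I_n -> R} :
  (forall i, 0 < f i) -> exists2 a, 0 < a & forall i, a <= f i.
Proof.
move=> f_gt0; have S_ge0 : 0 <= \sum_i (f i)^-1.
  by apply: sumr_ge0 => i _; rewrite invr_ge0 (ltW (f_gt0 i)).
have S1_gt0 : 0 < 1 + \sum_i (f i)^-1 by rewrite ltr_pwDl.
exists (1 + \sum_i (f i)^-1)^-1 => [|i]; first by rewrite invr_gt0.
rewrite -lef_pV2 ?posrE ?invr_gt0 // invrK (bigD1 i) //= addrCA lerDl.
by rewrite addr_ge0 // sumr_ge0 // => j _; rewrite invr_ge0 (ltW (f_gt0 j)).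
Qed.

Section RootFreeDisk.
Context {C : numClosedFieldType}.

Lemma coef_prod_XsubC_le {rho : C} {rs : seq C} :
  0 < rho -> all (fun z => rho <= `|z|) rs ->
  forall k, `|(\prod_(z <- rs) ('X - z%:P))`_k| * rho ^+ k
            <= 2 ^+ size rs * `|(\prod_(z <- rs) ('X - z%:P))`_0|.
Proof.
move=> rho0; elim: rs => [|z rs IH] /=.
  move=> _ [|k]; first by rewrite big_nil coef1 expr0 !mulr1 mul1r.
  by rewrite big_nil coef1 normr0 mul0r mulr_ge0.
move=> /andP[rho_z /IH {}IH] k; rewrite big_cons.
set Q := \prod_(_ <- rs) _.
rewrite mulrBl !coefB !coefXM !coefCM /= sub0r normrN normrM.
have ge0_2rs : 0 <= 2 ^+ size rs :> C by rewrite exprn_ge0 // ler0n.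
case: k => [|k] /=.
  rewrite sub0r normrN normrM expr0 mulr1 -[X in X <= _]mul1r ler_wpM2r //.
    by rewrite mulr_ge0.
  by rewrite exprn_ege1 // ler1n.
apply: le_trans (ler_wpM2r (exprn_ge0 _ (ltW rho0)) (ler_normB _ _)) _.
rewrite mulrDl normrM exprS.
have le1 : `|Q`_k| * (rho * rho ^+ k) <= 2 ^+ size rs * `|Q`_0| * `|z|.
  rewrite mulrCA mulrC; apply: ler_pM => //; last exact: ltW.
  by rewrite mulr_ge0 // exprn_ge0 // ltW.
have le2 : `|z| * `|Q`_k.+1| * (rho * rho ^+ k) <= `|z| * (2 ^+ size rs * `|Q`_0|).
  by rewrite -mulrA -exprS ler_wpM2l.
apply: le_trans (lerD le1 le2) _; rewrite exprS.
by rewrite le_eqVlt; apply/orP; left; apply/eqP; ring.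
Qed.

Lemma coef_root_free_le {h : {poly C}} {rho : C} :
  0 < rho -> (forall r, root h r -> rho <= `|r|) ->
  forall k, `|h`_k| * rho ^+ k <= 2 ^+ size h * `|h`_0|.
Proof.
move=> rho0 root_h k.
have [->|h0] := eqVneq h 0; first by rewrite !coef0 normr0 !mul0r mulr0.
have [rs hE] := closed_field_poly_normal h.
have rho_rs : all (fun z => rho <= `|z|) rs.
  apply/allP => z z_rs; apply: root_h.
  by rewrite hE rootZ ?lead_coef_eq0 // root_prod_XsubC.
have size_h : size h = (size rs).+1.
  by rewrite hE size_scale ?lead_coef_eq0 // size_prod_XsubC.
have := coef_prod_XsubC_le rho0 rho_rs k.
rewrite size_h hE !coefZ !normrM -mulrA.
move=> /(ler_wpM2l (normr_ge0 (lead_coef h))) /le_trans; rewrite mulrCA; apply.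
by apply: ler_wpM2r; rewrite ?mulr_ge0 // ler_weXn2l ?ler1n.
Qed.

Lemma norm_coef_sum_scale_sub_le (G : nat -> {poly C}) (k i : nat) (t : C) :
  0 < t -> t <= 1 ->
  `|(\sum_(j < k.+1) t ^+ j *: G j)`_i - (G 0%N)`_i|
    <= t * \sum_(j < k) `|(G j.+1)`_i|.
Proof.
move=> t0 t1; rewrite coef_sum big_ord_recl expr0 scale1r addrAC subrr add0r.
apply: le_trans (ler_norm_sum _ _ _) _; rewrite mulr_sumr; apply: ler_sum => j _.
rewrite coefZ normrM normrX (ger0_norm (ltW t0)) lift0 exprS -mulrA ler_pM2l //.
by rewrite ler_piMl // exprn_ile1 // ltW.
Qed.

Lemma coef_root_free_perturb_le {h g : {poly C}} {rho e : C} {N i : nat} :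
  0 < rho -> (forall r, root h r -> rho <= `|r|) -> (size h <= N)%N ->
  g`_0 = 0 -> `|h`_0 - g`_0| <= e -> `|h`_i - g`_i| <= e ->
  `|g`_i| * rho ^+ i <= e * (rho ^+ i + 2 ^+ N).
Proof.
move=> rho0 root_h size_h g0 e0 ei.
have rho_i_ge0 : 0 <= rho ^+ i by rewrite exprn_ge0 // ltW.
have h0_le : 2 ^+ size h * `|h`_0| <= 2 ^+ N * e.
  rewrite g0 subr0 in e0; apply: ler_pM; rewrite ?exprn_ge0 ?ler0n //.
  by rewrite ler_weXn2l ?ler1n.
have gi_le : `|g`_i| <= `|h`_i| + e.
  by rewrite -lerBlDl; apply: le_trans (lerB_dist _ _) _; rewrite distrC.
apply: le_trans (ler_wpM2r rho_i_ge0 gi_le) _; rewrite mulrDl mulrDr addrC.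
by rewrite lerD // (le_trans (coef_root_free_le rho0 root_h i)) // [X in _ <= X]mulrC.
Qed.

Lemma perturbation_has_root_near0 {G : nat -> {poly C}} (k : nat) {rho delta : C} :
  G 0%N != 0 -> root (G 0%N) 0 -> 0 < rho -> 0 < delta ->
  ~ (forall t, 0 < t -> t <= delta -> forall r, `|r| < rho ->
       ~~ root (\sum_(j < k.+1) t ^+ j *: G j) r).
Proof.
move=> G0_neq0 G0_root0 rho0 delta0 root_free.
pose F t := \sum_(j < k.+1) t ^+ j *: G j.
pose E i : C := \sum_(j < k) `|(G j.+1)`_i|.
have E_ge0 i : 0 <= E i by apply: sumr_ge0.
pose N := (\max_(j < k.+1) size (G j))%N.
have size_F t : (size (F t) <= N)%N.
  apply: leq_trans (size_sum _ _ _) _; apply/bigmax_leqP => j _.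
  exact: leq_trans (size_scale_leq _ _) (leq_bigmax _).
pose i0 := (size (G 0%N)).-1; pose c : C := `|(G 0%N)`_i0|.
have c0 : 0 < c by rewrite normr_gt0 -lead_coefE lead_coef_eq0.
have rho_i0 : 0 < rho ^+ i0 by rewrite exprn_gt0.
pose B : C := (E 0%N + E i0) * (rho ^+ i0 + 2 ^+ N).
have B_ge0 : 0 <= B by rewrite mulr_ge0 ?addr_ge0 ?exprn_ge0 ?ler0n // ltW.
have Bc_ge0 : 0 <= B / (c * rho ^+ i0) by rewrite divr_ge0 // mulr_ge0 // ltW.
have dinv_ge0 : 0 <= delta^-1 by rewrite invr_ge0 ltW.
(* A single t with t K < 1 gives t < 1, t < delta and t B < c rho^i0 at once. *)
pose K := 1 + delta^-1 + B / (c * rho ^+ i0).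
have [t t0 tK] : exists2 t, 0 < t & t * K < 1.
  by apply: exists_pos_mul_lt1; rewrite !addr_ge0.
have tK' X : 0 <= X -> X <= K -> t * X < 1.
  by move=> X0 XK; apply: le_lt_trans tK; rewrite ler_pM2l.
have t1 : t < 1 by rewrite -[t]mulr1 tK' // /K -addrA lerDl addr_ge0.
have t_delta : t < delta.
  by rewrite -[delta]mul1r -ltr_pdivrMr // tK' // /K addrAC lerDr addr_ge0.
have tB : t * B < c * rho ^+ i0.
  by rewrite -[_ * rho ^+ i0]mul1r -ltr_pdivrMr ?mulr_gt0 // -mulrA tK' // /K lerDr addr_ge0.
have root_far r : root (F t) r -> rho <= `|r|.
  move=> Fr; rewrite real_leNgt ?normr_real ?(gtr0_real rho0) //.
  by apply: contraL Fr; apply: root_free t t0 (ltW t_delta) r.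
have F_close i : `|(F t)`_i - (G 0%N)`_i| <= t * E i.
  exact: norm_coef_sum_scale_sub_le t0 (ltW t1).
have F_close0 : `|(F t)`_0 - (G 0%N)`_0| <= t * (E 0%N + E i0).
  by apply: le_trans (F_close 0%N) _; rewrite ler_pM2l // lerDl.
have F_close_i0 : `|(F t)`_i0 - (G 0%N)`_i0| <= t * (E 0%N + E i0).
  by apply: le_trans (F_close i0) _; rewrite ler_pM2l // lerDr.
have G00 : (G 0%N)`_0 = 0 by rewrite -horner_coef0; apply/rootP.
have := coef_root_free_perturb_le rho0 root_far (size_F t) G00 F_close0 F_close_i0.
by rewrite -mulrA => /(lt_le_trans tB); rewrite ltxx.
Qed.
End RootFreeDisk.

Lemma horner_mmap_polyC (R : comNzRingType) n (h : 'I_n -> {poly R})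
    (q : {mpoly R[n]}) (s : R) :
  (mmap polyC h q).[s] = q.@[fun i => (h i).[s]].
Proof.
rewrite mevalE /mmap horner_sum; apply: eq_bigr => m _.
rewrite hornerCM /mmap1 horner_prod; congr (_ * _).
by apply: eq_bigr => i _; rewrite horner_exp.
Qed.

Lemma mmap_polyC_scale_dhomog {R : comNzRingType} {n j} (h : 'I_n -> {poly R})
    (t : R) {q : {mpoly R[n]}} :
  q \is j.-homog -> mmap polyC (fun i => t *: h i) q = t ^+ j *: mmap polyC h q.
Proof.
move/dhomogP => q_hom; rewrite /mmap scaler_sumr !big_seq; apply: eq_bigr => m /q_hom <-.
rewrite /mmap1; under eq_bigr do rewrite exprZn.
by rewrite scaler_prod prodrXr -mdegE scalerAr.
Qed.

Lemma pihomog_lt_mdeg_supp {R : nzRingType} {n} {q : {mpoly R[n]}} {M j} :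
  (forall m, m \in msupp q -> (M <= mdeg m)%N) -> (j < M)%N -> pihomog mdeg j q = 0.
Proof.
move=> low jM; rewrite pihomogE big_seq_cond big_pred0 // => m.
apply/negbTE/andP => -[/low M_m /eqP m_j].
by move: jM; rewrite -m_j ltnNge M_m.
Qed.

Lemma mmap_polyC_scale_lowest {R : comNzRingType} {n M} (h : 'I_n -> {poly R})
    (t : R) {q : {mpoly R[n]}} :
  (forall m, m \in msupp q -> (M <= mdeg m)%N) ->
  mmap polyC (fun i => t *: h i) q =
    t ^+ M *: \sum_(j < (msize q).+1) t ^+ j *: mmap polyC h (pihomog mdeg (M + j) q).
Proof.
move=> low; have size_q : (msize q <= M + (msize q).+1)%N by rewrite addnS leqW // leq_addl.
rewrite {1}(pihomog_partitionE size_q).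
rewrite raddf_sum big_split_ord /= big1 ?add0r => [|j _]; last first.
  by rewrite (pihomog_lt_mdeg_supp low) ?raddf0.
rewrite scaler_sumr; apply: eq_bigr => j _.
by rewrite (mmap_polyC_scale_dhomog _ _ (pihomogP _ _ _)) scalerA exprD.
Qed.

Lemma base_expansion_inj (K d : nat) (f g : 'I_d -> nat) :
  (forall i, f i < K)%N -> (forall i, g i < K)%N ->
  (\sum_(i < d) K ^ i * f i = \sum_(i < d) K ^ i * g i)%N -> f =1 g.
Proof.
elim: d f g => [|d IH] f g f_lt g_lt; first by move=> _ [].
have K0 : (0 < K)%N by apply: leq_ltn_trans (f_lt ord0).
have split_sum (h : 'I_d.+1 -> nat) : (\sum_(i < d.+1) K ^ i * h i =
    h ord0 + (\sum_(i < d) K ^ i * h (lift ord0 i)) * K)%N.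
  rewrite big_ord_recl expn0 mul1n big_distrl; congr (_ + _)%N.
  by apply: eq_bigr => i _; rewrite lift0 expnS -mulnA mulnC.
rewrite !split_sum => eq_fg.
have eq0 : f ord0 = g ord0.
  by have := congr1 (modn^~ K) eq_fg; rewrite !(addnC (_ ord0)) !modnMDl !modn_small.
have eq_lift : forall i : 'I_d, f (lift ord0 i) = g (lift ord0 i).
  apply: IH => [i|i|]; [exact: f_lt|exact: g_lt|].
  have := congr1 (divn^~ K) eq_fg.
  by rewrite !(addnC (_ ord0)) !divnMDl // !divn_small // !addn0.
by move=> i; case: (unliftP ord0 i) => [j ->|->].
Qed.

Lemma mpoly_exists_nonroot {F : closedFieldType} {n} {P : {mpoly F[n]}} :
  P != 0 -> exists w, P.@[w] != 0.
Proof.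
move=> P_neq0; pose K := msize P.
pose enc (m : 'X_{1..n}) := (\sum_(i < n) K ^ i * m i)%N.
pose Phi := mmap polyC (fun i => 'X^(K ^ i)) P.
have Phi_horner x : Phi.[x] = P.@[fun i => x ^+ (K ^ i)].
  by rewrite horner_mmap_polyC; apply: meval_eq => i; rewrite hornerXn.
have digit_lt m i : m \in msupp P -> (m i < K)%N.
  move=> /msize_mdeg_lt; apply: leq_trans; rewrite ltnS mdegE.
  by rewrite (bigD1 i) //= leq_addr.
have Phi_coef m0 : m0 \in msupp P -> Phi`_(enc m0) = P@_m0.
  move=> m0_P; rewrite /Phi /mmap coef_sum (bigD1_seq m0) ?msupp_uniq //=.
  have mmap1_enc m : mmap1 (fun i => 'X^(K ^ i)) m = 'X^(enc m) :> {poly F}.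
    by rewrite /mmap1 /enc -prodrXr; apply: eq_bigr => i _; rewrite exprM.
  rewrite mmap1_enc coefCM coefXn eqxx mulr1 big_seq_cond big1 ?addr0 //.
  move=> m /andP[m_P m_m0]; rewrite mmap1_enc coefCM coefXn.
  case: eqP => [enc_eq|_]; last by rewrite mulr0.
  case/eqP: m_m0; apply/mnmP/(@base_expansion_inj K) => // i.
  - exact: digit_lt.
  - exact: digit_lt.
have [m0 m0_P] : exists m0, m0 \in msupp P.
  case E: (msupp P) => [|m s]; last by exists m; rewrite inE eqxx.
  by move/eqP: E; rewrite msupp_eq0 (negbTE P_neq0).
have Phi_neq0 : Phi != 0.
  apply/eqP => Phi0; have := Phi_coef m0 m0_P.
  by rewrite Phi0 coef0 => /esym/eqP; rewrite mcoeff_eq0 m0_P.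
have [x Phi_x] := closed_nonrootP Phi Phi_neq0.
by exists (fun i => x ^+ (K ^ i)); rewrite -Phi_horner.
Qed.

Lemma normr_1_subM_lt1 (C : numClosedFieldType) (t z : C) :
  0 < t -> t * `|z| ^+ 2 < 2 * 'Re z -> `|1 - t * z| < 1.
Proof.
move=> t0 z_in; have t_real : t \is Num.real by apply: gtr0_real.
have Re2 : z + z^* = 2 * 'Re z.
  by rewrite ReE mulrC -mulrA mulVf ?mulr1 // pnatr_eq0.
have norm2 : `|1 - t * z| ^+ 2 = 1 - t * (2 * 'Re z - t * `|z| ^+ 2).
  rewrite (normCK (1 - t * z)) rmorphB rmorph1 rmorphM /= (conj_Creal t_real) -Re2 (normCK z).
  by ring.
rewrite -(ltr_pXn2r (_ : 0 < 2)%N) ?nnegrE // expr1n norm2.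
by rewrite gtrDl oppr_lt0 mulr_gt0 // subr_gt0.
Qed.

Lemma scaled_line_in_shifted_disk {C : numClosedFieldType} {n} {zeta : 'I_n -> C}
    (v : 'I_n -> C) :
  (forall i, 0 < 'Re (zeta i)) ->
  exists rho delta : C, [/\ 0 < rho, 0 < delta &
    forall r t, `|r| < rho -> 0 < t -> t <= delta ->
      forall i, `|1 - t * (zeta i + r * v i)| < 1].
Proof.
move=> Re_zeta; have [a a0 a_Re] := exists_pos_lower_bound Re_zeta.
have a_ge0 := ltW a0.
pose Z := \sum_i `|zeta i|; pose V := 1 + \sum_i `|v i|.
have le_sum (f : 'I_n -> C) i : `|f i| <= \sum_j `|f j|.
  by rewrite (bigD1 i) //= lerDl sumr_ge0.
have Z_ge0 : 0 <= Z by apply: sumr_ge0.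
have V0 : 0 < V by rewrite ltr_pwDl ?sumr_ge0.
have Za_ge0 : 0 <= Z + a by rewrite addr_ge0.
have Za0 : 0 < 1 + (Z + a) ^+ 2 by rewrite ltr_pwDl // exprn_ge0.
exists (a / (2 * V)), (a / (1 + (Z + a) ^+ 2)); split.
- by rewrite divr_gt0 ?mulr_gt0.
- by rewrite divr_gt0.
move=> r t r_lt t0 t_le i; apply: normr_1_subM_lt1 => //.
have rv_le : `|r * v i| <= a / 2.
  rewrite normrM; apply: le_trans (ler_pM _ _ (ltW r_lt) (_ : `|v i| <= V)) _ => //.
    by apply: le_trans (le_sum v i) _; rewrite lerDr.
  by rewrite le_eqVlt; apply/orP; left; apply/eqP; field; rewrite lt0r_neq0.
have Re_ge : a <= 2 * 'Re (zeta i + r * v i).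
  have Re_rv : - (a / 2) <= 'Re (r * v i).
    apply: real_lerNnormlW; first exact: Creal_Re.
    exact: le_trans (leif_normC_Re_Creal _) rv_le.
  rewrite raddfD /= mulrDr (_ : a = 2 * a + 2 * - (a / 2)); last by field.
  by apply: lerD; apply: ler_wpM2l; rewrite ?ler0n ?a_Re.
have norm_le : `|zeta i + r * v i| ^+ 2 <= (Z + a) ^+ 2.
  rewrite ler_pXn2r ?nnegrE //; apply: le_trans (ler_normD _ _) _.
  apply: lerD; first exact: le_sum.
  by apply: le_trans rv_le _; rewrite ler_pdivrMr ?ltr0n // ler_peMr // ler1n.
apply: lt_le_trans Re_ge; apply: le_lt_trans (ler_wpM2l (ltW t0) norm_le) _.
apply: le_lt_trans (ler_wpM2r (exprn_ge0 _ Za_ge0) t_le) _.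
by rewrite mulrAC ltr_pdivrMr // ltr_pM2l // ltrDr.
Qed.

Lemma lowest_pihomog_nonroot (C : numClosedFieldType) n M (q : {mpoly C[n]}) :
  (forall z : 'I_n -> C, (forall i, `|1 - z i| < 1) -> q.@[z] != 0) ->
  (forall m, m \in msupp q -> (M <= mdeg m)%N) ->
  pihomog mdeg M q != 0 ->
  forall zeta : 'I_n -> C, (forall i, 0 < 'Re (zeta i)) ->
    (pihomog mdeg M q).@[zeta] != 0.
Proof.
move=> q_free low PM_neq0 zeta Re_zeta; apply/negP => /eqP PM_zeta.
have [w PM_w] := mpoly_exists_nonroot PM_neq0.
pose v i := w i - zeta i.
pose L i : {poly C} := (zeta i)%:P + (v i)%:P * 'X.
have L_horner s i : (L i).[s] = zeta i + s * v i.
  by rewrite hornerD hornerC hornerCM hornerX mulrC.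
pose G j := mmap polyC L (pihomog mdeg (M + j) q).
have G0_horner s : (G 0%N).[s] = (pihomog mdeg M q).@[fun i => zeta i + s * v i].
  by rewrite horner_mmap_polyC addn0; apply: meval_eq => i; apply: L_horner.
have G0_neq0 : G 0%N != 0.
  apply: contraNneq PM_w => G0.
  have -> : (pihomog mdeg M q).@[w] = (G 0%N).[1].
    by rewrite G0_horner; apply: meval_eq => i; rewrite mul1r /v addrC subrK.
  by rewrite G0 horner0.
have G0_root : root (G 0%N) 0.
  by apply/rootP; rewrite G0_horner -[RHS]PM_zeta; apply: meval_eq => i; rewrite mul0r addr0.
have [rho [delta [rho0 delta0 in_disk]]] := scaled_line_in_shifted_disk v Re_zeta.
apply: (perturbation_has_root_near0 (msize q) G0_neq0 G0_root rho0 delta0).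
move=> t t0 t_delta r r_rho; apply: contra (q_free _ (in_disk r t r_rho t0 t_delta)).
rewrite /root /G => F_r; rewrite (_ : q.@[_] = (mmap polyC (fun i => t *: L i) q).[r]).
  by rewrite (mmap_polyC_scale_lowest _ _ low) hornerZ (eqP F_r) mulr0.
by rewrite horner_mmap_polyC; apply: meval_eq => i; rewrite hornerZ L_horner.
Qed.

Theorem theorem14p1 (d n M : nat) (p : {mpoly CC[d]}) :
  (msize p).-1 = n ->
  (forall z : 'I_d -> CC, in_polydisk z -> p.@[z] != 0) ->
  (forall m, m \in msupp (shift_u p) -> (M <= mdeg m)%N) ->
  hpart M (shift_u p) != 0 ->
  forall zeta : 'I_d -> CC, in_right_halfplane zeta ->
    (hpart M (shift_u p)).@[zeta] != 0.
Proof.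
move=> _ p_free low PM_neq0 zeta Re_zeta.
apply: lowest_pihomog_nonroot => // [z z_disk|i].
- rewrite /shift_u comp_mpoly_meval; apply: p_free => i /=.
  by rewrite tnth_mktuple mevalB meval1 mevalXU.
- by rewrite -complexRe ltcR.
Qed.
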